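(* Let $\bm{B}\in\mathbb{C}^{m\times d_1}$, $\bm{A}\in\mathbb{C}^{m\times d_2}$, $\bm{y}\in\mathbb{C}^m$. The functions $F_1,F_2:\mathbb{R}^{d_1}\times\mathbb{R}^{d_2}\to\mathbb{R}$ defined by $$F_1(\bm{h},\bm{x})=\frac14\|\bm{Bh}\|_4^4+\frac14\|\bm{Ax}\|_4^4+\frac12\Big(\|\bm{Bh}\odot\bm{Ax}\|_2^2+\|\bm{y}\odot\bm{Bh}\|_2^2+\|\bm{Ax}\|_2^2+\|\bm{y}\|_2^2\Big),$$ $$F_2(\bm{h},\bm{x})=\frac14\|\bm{Bh}\|_4^4+\frac14\|\bm{Ax}\|_4^4+\frac12\|\bar{\bm{y}}\odot\bm{Bh}+\overline{\bm{Ax}}\|_2^2$$ are both convex on $\mathbb{R}^{d_1+d_2}$.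
   Context: $\odot$ is the Hadamard (elementwise) product, $\bar{\cdot}$ denotes entrywise complex conjugation, and for $\bm{w}\in\mathbb{C}^m$, $\|\bm{w}\|_2^2=\sum_j|w_j|^2$, $\|\bm{w}\|_4^4=\sum_j|w_j|^4$. The variables $\bm{h}\in\mathbb{R}^{d_1}$, $\bm{x}\in\mathbb{R}^{d_2}$ are real. *)

From HB Require Import structures.
From mathcomp Require Import all_boot all_order all_algebra.
From mathcomp Require Import complex.
From mathcomp Require Import reals.
Set Implicit Arguments. Unset Strict Implicit. Unset Printing Implicit Defensive.
Import Order.TTheory GRing.Theory Num.Theory.
Local Open Scope ring_scope.

Definition cabs (R : rcfType) (z : R[i]) : R := ComplexField.Normc.normc z.

Definition cvec (R : rcfType) (d : nat) (h : 'cV[R]_d) : 'cV[R[i]]_d :=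
  map_mx (fun r => r%:C%C) h.

Definition conjv (R : rcfType) (m : nat) (w : 'cV[R[i]]_m) : 'cV[R[i]]_m :=
  map_mx (@conjc R) w.

Definition hadamard (R : rcfType) (m : nat) (u v : 'cV[R[i]]_m) : 'cV[R[i]]_m :=
  \col_i (u i 0 * v i 0).

Definition norm2sq (R : rcfType) (m : nat) (w : 'cV[R[i]]_m) : R :=
  \sum_(j < m) cabs (w j 0) ^+ 2.

Definition norm4pow4 (R : rcfType) (m : nat) (w : 'cV[R[i]]_m) : R :=
  \sum_(j < m) cabs (w j 0) ^+ 4.

Definition F1 (R : rcfType) (m d1 d2 : nat) (B : 'M[R[i]]_(m, d1))
  (A : 'M[R[i]]_(m, d2)) (y : 'cV[R[i]]_m) (h : 'cV[R]_d1) (x : 'cV[R]_d2) : R :=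
  let Bh := B *m cvec h in
  let Ax := A *m cvec x in
  4^-1 * norm4pow4 Bh + 4^-1 * norm4pow4 Ax
  + 2^-1 * (norm2sq (hadamard Bh Ax) + norm2sq (hadamard y Bh)
            + norm2sq Ax + norm2sq y).

Definition F2 (R : rcfType) (m d1 d2 : nat) (B : 'M[R[i]]_(m, d1))
  (A : 'M[R[i]]_(m, d2)) (y : 'cV[R[i]]_m) (h : 'cV[R]_d1) (x : 'cV[R]_d2) : R :=
  let Bh := B *m cvec h in
  let Ax := A *m cvec x in
  4^-1 * norm4pow4 Bh + 4^-1 * norm4pow4 Ax
  + 2^-1 * norm2sq (hadamard (conjv y) Bh + conjv Ax).

(* convexity of a function on R^{d1} x R^{d2} (= R^{d1+d2}) *)
Definition convex_on_prod (R : realFieldType) (d1 d2 : nat)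
  (F : 'cV[R]_d1 -> 'cV[R]_d2 -> R) : Prop :=
  forall (h h' : 'cV[R]_d1) (x x' : 'cV[R]_d2) (t : R), 0 <= t -> t <= 1 ->
    F (t *: h + (1 - t) *: h') (t *: x + (1 - t) *: x')
      <= t * F h x + (1 - t) * F h' x'.

(* Write p_j = |(Bh)_j|^2 and q_j = |(Ax)_j|^2.  Since h and x are real,
   (Bh)_j and (Ax)_j are real-affine functions of (h, x), so p_j and q_j are
   convex and nonnegative.  The cross term |Bh . Ax|^2 completes the square:
   entrywise F1 is (p_j + q_j)^2/4 + |y_j|^2 p_j/2 + q_j/2 + |y_j|^2/2, a
   nonnegative combination of convex functions.  In F2 the vector
   conj(y) . Bh + conj(Ax) is still real-affine, conjugation being R-linear,
   so its squared modulus is convex as well. *)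

From HB Require Import structures.
From mathcomp Require Import all_boot all_order all_algebra.
From mathcomp Require Import complex.
From mathcomp Require Import reals.
From mathcomp Require Import ring lra.
Set Implicit Arguments.
Unset Strict Implicit.
Unset Printing Implicit Defensive.

Import Order.TTheory GRing.Theory Num.Theory.
Local Open Scope ring_scope.

Lemma sqrr_convex_comb (R : realFieldType) (t a b : R) : 0 <= t -> t <= 1 ->
  (t * a + (1 - t) * b) ^+ 2 <= t * a ^+ 2 + (1 - t) * b ^+ 2.
Proof.
move=> t0 t1; rewrite -subr_ge0.
have -> : t * a ^+ 2 + (1 - t) * b ^+ 2 - (t * a + (1 - t) * b) ^+ 2
          = t * (1 - t) * (a - b) ^+ 2 by ring.
by rewrite mulr_ge0 ?sqr_ge0 // mulr_ge0 // subr_ge0.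
Qed.

Section ConvexOnProd.
Variables (R : realFieldType) (d1 d2 : nat).
Implicit Types F G : 'cV[R]_d1 -> 'cV[R]_d2 -> R.

Lemma eq_convex_on_prod F G :
  (forall h x, F h x = G h x) -> convex_on_prod G -> convex_on_prod F.
Proof. by move=> eFG hG h h' x x' t t0 t1; rewrite !eFG; apply: hG. Qed.

Lemma convex_on_prod_cst (c : R) : convex_on_prod (fun (_ : 'cV[R]_d1) (_ : 'cV[R]_d2) => c).
Proof. by move=> h h' x x' t _ _; rewrite -mulrDl subrKC mul1r. Qed.

Lemma convex_on_prodD F G : convex_on_prod F -> convex_on_prod G ->
  convex_on_prod (fun h x => F h x + G h x).
Proof.
move=> hF hG h h' x x' t t0 t1; rewrite !mulrDr addrACA.
by apply: lerD; [apply: hF | apply: hG].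
Qed.

Lemma convex_on_prodZ (c : R) F : 0 <= c -> convex_on_prod F ->
  convex_on_prod (fun h x => c * F h x).
Proof.
move=> c0 hF h h' x x' t t0 t1; rewrite mulrCA [(1 - t) * _]mulrCA -mulrDr.
by rewrite ler_wpM2l //; apply: hF.
Qed.

Lemma convex_on_prod_sum (I : finType) (F : I -> 'cV[R]_d1 -> 'cV[R]_d2 -> R) :
  (forall i, convex_on_prod (F i)) -> convex_on_prod (fun h x => \sum_i F i h x).
Proof.
move=> hF h h' x x' t t0 t1; rewrite !mulr_sumr -big_split /=.
by apply: ler_sum => i _; apply: hF.
Qed.

Lemma convex_on_prod_sqr F : (forall h x, 0 <= F h x) -> convex_on_prod F ->
  convex_on_prod (fun h x => F h x ^+ 2).
Proof.
move=> F0 hF h h' x x' t t0 t1.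
apply: le_trans (sqrr_convex_comb _ _ t0 t1).
by rewrite lerXn2r ?nnegrE ?F0 ?hF // addr_ge0 // mulr_ge0 ?F0 ?subr_ge0.
Qed.

End ConvexOnProd.

Section AffineOnProd.
Variables (R : rcfType) (d1 d2 : nat).
Local Open Scope complex_scope.
Implicit Types g f : 'cV[R]_d1 -> 'cV[R]_d2 -> R[i].

Definition affine_on_prod g : Prop :=
  forall (h h' : 'cV[R]_d1) (x x' : 'cV[R]_d2) (t : R),
    g (t *: h + (1 - t) *: h') (t *: x + (1 - t) *: x')
      = t%:C * g h x + (1 - t)%:C * g h' x'.

Lemma cvecD d (h h' : 'cV[R]_d) : cvec (h + h') = cvec h + cvec h'.
Proof. by apply/matrixP => i j; rewrite !mxE rmorphD. Qed.

Lemma cvecZ d (a : R) (h : 'cV[R]_d) : cvec (a *: h) = a%:C *: cvec h.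
Proof. by apply/matrixP => i j; rewrite !mxE rmorphM. Qed.

Lemma affine_on_prod_mulmxl m (M : 'M[R[i]]_(m, d1)) (j : 'I_m) :
  affine_on_prod (fun h _ => (M *m cvec h) j 0).
Proof. by move=> h h' x x' t; rewrite cvecD !cvecZ mulmxDr -!scalemxAr !mxE. Qed.

Lemma affine_on_prod_mulmxr m (M : 'M[R[i]]_(m, d2)) (j : 'I_m) :
  affine_on_prod (fun _ x => (M *m cvec x) j 0).
Proof. by move=> h h' x x' t; rewrite cvecD !cvecZ mulmxDr -!scalemxAr !mxE. Qed.

Lemma affine_on_prodD f g : affine_on_prod f -> affine_on_prod g ->
  affine_on_prod (fun h x => f h x + g h x).
Proof. by move=> hf hg h h' x x' t; rewrite hf hg; ring. Qed.

Lemma affine_on_prodMl (c : R[i]) g : affine_on_prod g ->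
  affine_on_prod (fun h x => c * g h x).
Proof. by move=> hg h h' x x' t; rewrite hg; ring. Qed.

Lemma affine_on_prod_conj g : affine_on_prod g ->
  affine_on_prod (fun h x => (g h x)^*).
Proof.
move=> hg h h' x x' t; rewrite hg.
by case: (g h x) => a b; case: (g h' x') => a' b' /=; congr (_ +i* _); ring.
Qed.

Lemma cabs_sqr (a b : R) : cabs (a +i* b) ^+ 2 = a ^+ 2 + b ^+ 2.
Proof. by rewrite /cabs /= sqr_sqrtr // addr_ge0 ?sqr_ge0. Qed.

Lemma convex_on_prod_cabs_sqr g : affine_on_prod g ->
  convex_on_prod (fun h x => cabs (g h x) ^+ 2).
Proof.
move=> hg h h' x x' t t0 t1; rewrite hg.
case: (g h x) => a b; case: (g h' x') => a' b'.
rewrite !cabs_sqr /= !mul0r !subr0 !addr0.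
have := sqrr_convex_comb a a' t0 t1; have := sqrr_convex_comb b b' t0 t1; lra.
Qed.

End AffineOnProd.

Section Entrywise.
Variables (R : rcfType) (m : nat).
Local Open Scope complex_scope.
Implicit Types u v c : 'cV[R[i]]_m.

Lemma F1_entrywise u v c :
  4^-1 * norm4pow4 u + 4^-1 * norm4pow4 v
  + 2^-1 * (norm2sq (hadamard u v) + norm2sq (hadamard c u) + norm2sq v + norm2sq c)
  = \sum_j (4^-1 * (cabs (u j 0) ^+ 2 + cabs (v j 0) ^+ 2) ^+ 2
            + 2^-1 * (cabs (c j 0) ^+ 2 * cabs (u j 0) ^+ 2)
            + 2^-1 * cabs (v j 0) ^+ 2 + 2^-1 * cabs (c j 0) ^+ 2).
Proof.
rewrite /norm4pow4 /norm2sq -!big_split !mulr_sumr -!big_split /=.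
by apply: eq_bigr => j _; rewrite /cabs !mxE !ComplexField.Normc.normcM; field.
Qed.

Lemma F2_entrywise u v c :
  4^-1 * norm4pow4 u + 4^-1 * norm4pow4 v
  + 2^-1 * norm2sq (hadamard (conjv c) u + conjv v)
  = \sum_j (4^-1 * (cabs (u j 0) ^+ 2) ^+ 2 + 4^-1 * (cabs (v j 0) ^+ 2) ^+ 2
            + 2^-1 * cabs ((c j 0)^* * u j 0 + (v j 0)^*) ^+ 2).
Proof.
rewrite /norm4pow4 /norm2sq !mulr_sumr -!big_split /=.
by apply: eq_bigr => j _; rewrite !mxE -!exprM.
Qed.

End Entrywise.

Section Convexity.
Variables (R : rcfType) (m d1 d2 : nat).
Variables (B : 'M[R[i]]_(m, d1)) (A : 'M[R[i]]_(m, d2)) (y : 'cV[R[i]]_m).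
Local Open Scope complex_scope.

Let sqnorm_Bh (j : 'I_m) (h : 'cV[R]_d1) (_ : 'cV[R]_d2) := cabs ((B *m cvec h) j 0) ^+ 2.
Let sqnorm_Ax (j : 'I_m) (_ : 'cV[R]_d1) (x : 'cV[R]_d2) := cabs ((A *m cvec x) j 0) ^+ 2.

Let sqnorm_Bh_convex j : convex_on_prod (sqnorm_Bh j).
Proof. exact: convex_on_prod_cabs_sqr (affine_on_prod_mulmxl B j). Qed.

Let sqnorm_Ax_convex j : convex_on_prod (sqnorm_Ax j).
Proof. exact: convex_on_prod_cabs_sqr (affine_on_prod_mulmxr A j). Qed.

Let inv_ge0 (n : nat) : 0 <= n%:R^-1 :> R.
Proof. by rewrite invr_ge0 ler0n. Qed.

Lemma convex_F1 : convex_on_prod (F1 B A y).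
Proof.
apply: (eq_convex_on_prod (fun h x => F1_entrywise (B *m cvec h) (A *m cvec x) y)).
apply: convex_on_prod_sum => j.
have sum_ge0 h x : 0 <= sqnorm_Bh j h x + sqnorm_Ax j h x by rewrite addr_ge0 ?sqr_ge0.
have sum_sqr_convex := convex_on_prod_sqr sum_ge0
  (convex_on_prodD (sqnorm_Bh_convex j) (sqnorm_Ax_convex j)).
repeat apply: convex_on_prodD.
- exact: convex_on_prodZ (inv_ge0 4) sum_sqr_convex.
- exact: convex_on_prodZ (inv_ge0 2) (convex_on_prodZ (sqr_ge0 _) (sqnorm_Bh_convex j)).
- exact: convex_on_prodZ (inv_ge0 2) (sqnorm_Ax_convex j).
- exact: convex_on_prodZ (inv_ge0 2) (convex_on_prod_cst _).
Qed.

Lemma convex_F2 : convex_on_prod (F2 B A y).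
Proof.
apply: (eq_convex_on_prod (fun h x => F2_entrywise (B *m cvec h) (A *m cvec x) y)).
apply: convex_on_prod_sum => j.
repeat apply: convex_on_prodD.
- apply: convex_on_prodZ (inv_ge0 4) (convex_on_prod_sqr _ (sqnorm_Bh_convex j)).
  by move=> h x; apply: sqr_ge0.
- apply: convex_on_prodZ (inv_ge0 4) (convex_on_prod_sqr _ (sqnorm_Ax_convex j)).
  by move=> h x; apply: sqr_ge0.
- apply: convex_on_prodZ (inv_ge0 2) (convex_on_prod_cabs_sqr _).
  apply: affine_on_prodD; last exact: affine_on_prod_conj (affine_on_prod_mulmxr A j).
  exact: affine_on_prodMl (affine_on_prod_mulmxl B j).
Qed.

End Convexity.

Theorem mainTheorem3 (R : realType) (m d1 d2 : nat)
  (B : 'M[R[i]]_(m, d1)) (A : 'M[R[i]]_(m, d2)) (y : 'cV[R[i]]_m) :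
  convex_on_prod (F1 B A y) /\ convex_on_prod (F2 B A y).
Proof. by split; [apply: convex_F1 | apply: convex_F2]. Qed.
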